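(* Let $H$ be an $m\times n$ binary parity-check matrix with Tanner graph $G$, and let $\underline x$ be a point of the fundamental polytope of $H$. Let $T\subseteq\{1,\dots,m\}$ be a collection of check nodes. If $T$ is a cut-generating collection at $\underline x$, then there exists a fractional cycle at $\underline x$ (a cycle in the fractional subgraph $F$) all of whose check nodes belong to $T$.
   Context: The Tanner graph $G$ of $H$ is the bipartite graph with variable nodes $1,\dots,n$, check nodes $1,\dots,m$, and an edge between check $j$ and variable $i$ iff $H_{ji}=1$; $N(j)$ is the set of variable nodes adjacent to check $j$. The fundamental polytope is the set of $\underline x\in[0,1]^n$ such that for every $j$ and every odd-sized $V\subseteq N(j)$, $\sum_{i\in V}x_i-\sum_{i\in N(j)\setminus V}x_i\le |V|-1$. For a parity check (binary vector) with neighborhood $N$, its constraints are $\sum_{i\in V}x_i-\sum_{i\in N\setminus V}x_i\le |V|-1$ for odd $V\subseteq N$, and it generates a cut at $\underline x$ if one of them is violated at $\underline x$. A set $T$ of check nodes is a cut-generating collection at $\underline x$ if the redundant parity check obtained as the modulo-2 sum of the rows of $H$ indexed by $T$ generates a cut at $\underline x$. The fractional subgraph $F$ at $\underline x$ is the subgraph of $G$ consisting of the variable nodes $i$ with $0<x_i<1$, the check nodes adjacent to them, and all edges between these nodes; a fractional cycle is a cycle in $F$. *)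

From HB Require Import structures.
From mathcomp Require Import all_boot all_order all_algebra.
Set Implicit Arguments. Unset Strict Implicit. Unset Printing Implicit Defensive.
Import Order.TTheory GRing.Theory Num.Theory.
Local Open Scope ring_scope.

Definition nbhd (n : nat) (h : 'rV['F_2]_n) : {set 'I_n} :=
  [set i | h 0 i != 0].

Definition generates_cut (R : realFieldType) (n : nat)
    (h : 'rV['F_2]_n) (x : 'I_n -> R) : Prop :=
  exists V : {set 'I_n},
    [/\ V \subset nbhd h, odd #|V| &
        (#|V|%:R - 1 < \sum_(i in V) x i - \sum_(i in nbhd h :\: V) x i)].

Definition in_fundamental_polytope (R : realFieldType) (m n : nat)
    (H : 'M['F_2]_(m, n)) (x : 'I_n -> R) : Prop :=
  (forall i, 0 <= x i <= 1) /\
  (forall j : 'I_m, forall V : {set 'I_n},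
     V \subset nbhd (row j H) -> odd #|V| ->
     \sum_(i in V) x i - \sum_(i in nbhd (row j H) :\: V) x i <= #|V|%:R - 1).

Definition cut_generating (R : realFieldType) (m n : nat)
    (H : 'M['F_2]_(m, n)) (x : 'I_n -> R) (T : {set 'I_m}) : Prop :=
  generates_cut (\sum_(j in T) row j H) x.

Definition fractional (R : realFieldType) (n : nat) (x : 'I_n -> R) (i : 'I_n) : bool :=
  (0 < x i) && (x i < 1).

(* A cycle in the fractional subgraph F at x, with all check nodes in T:
   c_0 - v_0 - c_1 - v_1 - ... - c_{k-1} - v_{k-1} - c_0 with k >= 2,
   distinct check nodes c_t, distinct fractional variable nodes v_t.
   (Check nodes adjacent to fractional variables are automatically in F.) *)
Definition fractional_cycle_in (R : realFieldType) (m n : nat)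
    (H : 'M['F_2]_(m, n)) (x : 'I_n -> R) (T : {set 'I_m}) : Prop :=
  exists k : nat, exists c : 'I_k.+2 -> 'I_m, exists v : 'I_k.+2 -> 'I_n,
    [/\ injective c, injective v,
        (forall t, fractional x (v t)) /\
        (forall t, H (c t) (v t) != 0),
        (forall t, H (c (ordS t)) (v t) != 0) &
        (forall t, c t \in T)].

(* Write d_S(x, Y) for the l1-distance, over the positions in S, between x and
   the indicator vector of Y.  A parity check with support S cuts x exactly when
   d_S(x, Y) < 1 for some Y with |S :&: Y| odd.  If two checks with supports A
   and B share at most one fractional variable and their sum (support A Δ B)
   cuts x, then one of them cuts x: keep Y off A :&: B and round x down or up on
   A :&: B; the two roundings together cost exactly the number (0 or 1) of
   fractional positions of A :&: B, and a parity count shows that one side is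
   odd and costs less than 1.  No single row of H cuts a point of the
   fundamental polytope, so by induction on |T| we may discard the checks of T
   sharing at most one fractional variable with the other checks of T.  When
   none is left, every check of T has two fractional neighbours shared with
   other checks of T, and a non-backtracking walk in this subgraph closes a
   fractional cycle at its first repeated node. *)

From HB Require Import structures.
From mathcomp Require Import all_boot all_order all_algebra.
From mathcomp Require Import lra zify.
Set Implicit Arguments. Unset Strict Implicit. Unset Printing Implicit Defensive.
Import Order.TTheory GRing.Theory Num.Theory.

Lemma in_inj_shift (U : Type) (f : nat -> U) (i j : nat) :
  i < j -> f j = f i -> {in [pred p | p < j] &, injective f} ->
  {in [pred p | i < p <= j] &, injective f}.
Proof.
move=> ij fji inj p q; rewrite !inE => /andP[ip pj] /andP[iq qj] fpq.
have [pj'|] := ltnP p j; have [qj'|] := ltnP q j.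
- by apply: inj; rewrite ?inE.
- move=> jq; have qE : q = j by lia.
  by move: fpq; rewrite qE fji => /inj; rewrite !inE => /(_ pj' ij); lia.
- move=> jp; have pE : p = j by lia.
  by move: fpq; rewrite pE fji => /inj; rewrite !inE => /(_ ij qj'); lia.
- by lia.
Qed.

Section BipartiteCycle.
Variables (I J : finType) (e : I -> J -> bool) (L : {set I}).

Definition has_cycle_in : Prop :=
  exists k (c : 'I_k.+2 -> I) (v : 'I_k.+2 -> J),
    [/\ injective c, injective v, forall t, e (c t) (v t),
        forall t, e (c (ordS t)) (v t) & forall t, c t \in L].

Definition shared (c : I) : {set J} :=
  [set v | e c v & [exists c' in L, (c' != c) && e c' v]].

Hypothesis shared_gt1 : forall c, c \in L -> 1 < #|shared c|.

Definition walk_ok (p : I * J) := (p.1 \in L) && (p.2 \in shared p.1).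

Definition walk_step (p : I * J) : I * J :=
  let c := odflt p.1 [pick c in L | (c != p.1) && e c p.2] in
  (c, odflt p.2 [pick v in shared c | v != p.2]).

Lemma walk_stepP p : walk_ok p ->
  [/\ walk_ok (walk_step p), (walk_step p).1 != p.1,
      e (walk_step p).1 p.2 & (walk_step p).2 != p.2].
Proof.
case/andP => _; rewrite inE => /andP[_ /exists_inP[c cL /andP[cp ecp]]].
rewrite /walk_step; case: pickP => [c' /and3P[c'L c'p ec'p] | /(_ c)]; last first.
  by rewrite cL cp ecp.
case: pickP => [v /andP[vS vp] | none]; first by rewrite /walk_ok c'L vS.
have : shared c' \subset [set p.2].
  by apply/subsetP => w wS; have := none w; rewrite wS inE => /negbFE.
by move/subset_leq_card; rewrite cards1 leqNgt shared_gt1.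
Qed.

Section Walk.
Variable p0 : I * J.
Hypothesis p0_ok : walk_ok p0.

Definition walk t := iter t walk_step p0.

Definition node k : I + J :=
  if odd k then inr (walk k./2).2 else inl (walk k./2).1.

Lemma walk_ok_walk t : walk_ok (walk t).
Proof. by elim: t => // t IH; case: (walk_stepP IH). Qed.

Lemma node_double t : node t.*2 = inl (walk t).1.
Proof. by rewrite /node odd_double doubleK. Qed.

Lemma node_doubleS t : node t.*2.+1 = inr (walk t).2.
Proof. by rewrite /node /= odd_double uphalf_double. Qed.

Lemma node_nonbacktracking k : node k.+2 != node k.
Proof.
have [_ c_ne _ v_ne] := walk_stepP (walk_ok_walk k./2).
rewrite /node !oddS negbK (_ : k.+2./2 = (k./2).+1) //.
by case: (odd k); [apply: contra_neq v_ne | apply: contra_neq c_ne]; case.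
Qed.

Lemma node_first_repeat :
  exists i j, [/\ i < j, node j = node i & {in [pred p | p < j] &, injective node}].
Proof.
pose P j := [exists i : 'I_j, node i == node j].
have [j0 Pj0] : exists j, P j.
  have : ~~ injectiveb (fun k : 'I_#|{: I + J}|.+1 => node k).
    by apply/injectiveP => /leq_card; rewrite card_ord ltnn.
  case/injectivePn => k1 [k2 k12 node12].
  wlog lt12 : k1 k2 k12 node12 / k1 < k2.
    move=> gen; case: (ltngtP k1 k2) => [|lt21|/val_inj/eqP]; first exact: gen.
      by apply: (gen k2 k1); rewrite // eq_sym.
    by rewrite (negbTE k12).
  by exists k2; apply/existsP; exists (Ordinal lt12); rewrite node12.
have [j /existsP[i /eqP nij] jmin] := ex_minnP (ex_intro P j0 Pj0).
have distinct p q : p < q -> q < j -> node p != node q.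
  move=> pq qj; apply/eqP => npq.
  suff /jmin : P q by rewrite leqNgt qj.
  by apply/existsP; exists (Ordinal pq); rewrite npq.
exists i, j; split => // p q; rewrite !inE => pj qj npq.
case: (ltngtP p q) => // [pq|qp].
  by case/eqP: (distinct _ _ pq qj).
by case/eqP: (distinct _ _ qp pj).
Qed.

Lemma window_cycle s k :
  {in [pred p | s.*2 <= p < (s + k.+2).*2] &, injective node} ->
  e (walk s).1 (walk (s + k.+1)).2 -> has_cycle_in.
Proof.
move=> inj closing.
exists k, (fun t : 'I_k.+2 => (walk (s + t)).1), (fun t => (walk (s + t)).2).
split=> [t1 t2 /= c12 | t1 t2 /= v12 | t | t | t].
- have eq12 : (s + t1).*2 = (s + t2).*2.
    have := ltn_ord t1; have := ltn_ord t2 => lt2 lt1.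
    by apply: inj; rewrite ?inE ?node_double ?c12 //; lia.
  by apply: ord_inj; lia.
- have eq12 : (s + t1).*2.+1 = (s + t2).*2.+1.
    have := ltn_ord t1; have := ltn_ord t2 => lt2 lt1.
    by apply: inj; rewrite ?inE ?node_doubleS ?v12 //; lia.
  by apply: ord_inj; lia.
- by case/andP: (walk_ok_walk (s + t)) => _; rewrite inE => /andP[].
- rewrite /=; have [tk|] := ltnP t k.+1.
    rewrite modn_small // addnS.
    by have [] := walk_stepP (walk_ok_walk (s + t)).
  move=> kt; have -> : (t : nat) = k.+1 by have := ltn_ord t; lia.
  by rewrite modnn addn0.
- by case/andP: (walk_ok_walk (s + t)).
Qed.

Lemma walk_has_cycle : has_cycle_in.
Proof.
have [i [j [ij nji inj]]] := node_first_repeat.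
have parity : odd j = odd i by move: nji; rewrite /node; case: (odd i); case: (odd j).
have j_ne : j != i.+2.
  by apply/eqP => ji; move: (node_nonbacktracking i); rewrite -ji nji eqxx.
have [a ia] : exists a, i = a.*2 + odd i by exists i./2; rewrite addnC odd_double_half.
have [b jb] : exists b, j = b.*2 + odd i.
  by exists j./2; rewrite -parity addnC odd_double_half.
have ab : a.+2 <= b by lia.
case: (odd i) ia jb => /= ia jb; subst i j; rewrite ?addn1 ?addn0 in ij nji inj.
- (* A repeated variable node v_b = v_a: the cycle runs from c_(a+1) to c_b. *)
  apply: (@window_cycle a.+1 (b - a - 2)).
    move=> p q pW qW; apply: (in_inj_shift ij nji inj); rewrite !inE in pW qW *; lia.
  rewrite (_ : a.+1 + (b - a - 2).+1 = b); last by lia.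
  move: nji; rewrite !node_doubleS => -[->].
  by have [] := walk_stepP (walk_ok_walk a).
- apply: (@window_cycle a (b - a - 2)).
    move=> p q pW qW; apply: inj; rewrite !inE in pW qW *; lia.
  rewrite !node_double (_ : b = (a + (b - a - 2).+1).+1) in nji; last by lia.
  by case: nji => <-; have [] := walk_stepP (walk_ok_walk (a + (b - a - 2).+1)).
Qed.

End Walk.

Lemma has_cycle_in_shared c0 : c0 \in L -> has_cycle_in.
Proof.
move=> c0L; have /card_gt0P[v0 v0S] : 0 < #|shared c0|.
  exact: ltn_trans (shared_gt1 c0L).
by apply: (@walk_has_cycle (c0, v0)); rewrite /walk_ok c0L.
Qed.

End BipartiteCycle.

Local Open Scope ring_scope.

Section SetSums.
Variables (T : finType) (V : nmodType).

Lemma big_setSD (F : T -> V) (A B : {set T}) :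
  \sum_(i in (A :\: B) :|: (B :\: A)) F i =
  \sum_(i in A :\: B) F i + \sum_(i in B :\: A) F i.
Proof.
rewrite (big_setID A).
by congr (_ + _); apply: eq_bigl => i; rewrite !inE; case: (i \in A); case: (i \in B).
Qed.

Lemma big_splice (g : T -> bool -> V) (A B Y Z : {set T}) :
  \sum_(i in A) g i (i \in [set i | if i \in B then i \in Z else i \in Y]) =
  \sum_(i in A :\: B) g i (i \in Y) + \sum_(i in A :&: B) g i (i \in Z).
Proof.
rewrite (big_setID B) addrC.
by congr (_ + _); apply: eq_bigr => i; rewrite !inE; case: (i \in B); rewrite ?andbF.
Qed.

Lemma card_setI_sum (A Y : {set T}) :
  #|A :&: Y| = (\sum_(i in A) (i \in Y))%N.
Proof.
rewrite -sum1_card big_mkcond [RHS]big_mkcond; apply: eq_bigr => i _.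
by rewrite inE; case: (i \in A); case: (i \in Y).
Qed.

End SetSums.

(* The arithmetic core of [cuts_on_symdiff]: [cA], [pA] (resp. [cB], [pB]) are
   the cost and parity of Y on A :\: B (resp. B :\: A), [s b] and [t b] those of
   the rounding [b] on A :&: B, and [k] counts the fractional positions of A :&: B. *)
Lemma odd_cheap_side (R : realDomainType) (cA cB : R) (s : bool -> R)
    (pA pB k : nat) (t : bool -> nat) :
  0 <= cA -> 0 <= cB -> (forall b, 0 <= s b) ->
  odd (pA + pB) -> cA + cB < 1 ->
  (k <= 1)%N -> s false + s true = k%:R -> t true = (t false + k)%N ->
  exists b, (odd (pA + t b) /\ cA + s b < 1) \/ (odd (pB + t b) /\ cB + s b < 1).
Proof.
move=> cA0 cB0 s_ge0 opp cAB; have := s_ge0 false; have := s_ge0 true.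
case: k => [|[|//]] st_ge0 sf_ge0 _ sk tk.
  exists false; move: opp; rewrite !oddD.
  by case: (odd pA); case: (odd pB); case: (odd (t false)) => //= _;
    [right | left | left | right]; split => //; lra.
have ot : odd (t true) = ~~ odd (t false) by rewrite tk addn1.
have [oA|eA] := boolP (odd (pA + t false)).
  have [lt|ge] := ltrP (cA + s false) 1; first by exists false; left.
  exists true; right; split; last by lra.
  by move: opp oA; rewrite !oddD ot; case: (odd pA); case: (odd pB); case: (odd (t false)).
have oA : odd (pA + t true).
  by move: eA; rewrite !oddD ot; case: (odd pA); case: (odd (t false)).
have [lt|ge] := ltrP (cA + s true) 1; first by exists true; left.
exists false; right; split; last by lra.
by move: opp eA; rewrite !oddD; case: (odd pA); case: (odd pB); case: (odd (t false)).
Qed.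

Section CutsOn.
Variables (R : realFieldType) (n : nat) (x : 'I_n -> R).

Definition bitdist (i : 'I_n) (b : bool) : R := if b then 1 - x i else x i.

Definition cuts_on (S : {set 'I_n}) : Prop :=
  exists Y : {set 'I_n}, odd #|S :&: Y| /\ \sum_(i in S) bitdist i (i \in Y) < 1.

Lemma sum_bitdist (S V : {set 'I_n}) : V \subset S ->
  \sum_(i in S) bitdist i (i \in V) =
  #|V|%:R - (\sum_(i in V) x i - \sum_(i in S :\: V) x i).
Proof.
move=> VS; rewrite (big_setID V) (setIidPr VS) /=.
rewrite (eq_bigr (fun i => 1 - x i)) => [|i ->//].
rewrite [X in _ + X](eq_bigr x) => [|i]; last by rewrite inE => /andP[/negbTE ->].
by rewrite sumrB sumr_const; lra.
Qed.

Lemma generates_cutE (g : 'rV['F_2]_n) : generates_cut g x <-> cuts_on (nbhd g).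
Proof.
split=> [[V [VN oV lt]] | [Y [oY lt]]].
  by exists V; rewrite (setIidPr VN) sum_bitdist //; split => //; lra.
exists (nbhd g :&: Y); split => //; first exact: subsetIl.
move: lt; rewrite (eq_bigr (fun i => bitdist i (i \in nbhd g :&: Y))).
  by rewrite sum_bitdist ?subsetIl //; lra.
by move=> i iN; rewrite inE iN.
Qed.

Hypothesis x01 : forall i, 0 <= x i <= 1.

Lemma sum_bitdist_ge0 (S : {set 'I_n}) (f : 'I_n -> bool) :
  0 <= \sum_(i in S) bitdist i (f i).
Proof.
by apply: sumr_ge0 => i _; rewrite /bitdist; have := x01 i; case: (f i) => /andP[]; lra.
Qed.

Lemma bitdist_round i :
  bitdist i (1 <= x i) + bitdist i (0 < x i) = (fractional x i)%:R.
Proof.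
rewrite /bitdist /fractional; have /andP[x0 x1] := x01 i.
have [x_ge1|x_lt1] := leP 1 (x i); first by rewrite (lt_le_trans ltr01) //=; lra.
by rewrite andbT; case: ltP => /=; lra.
Qed.

Lemma round_up_down i : (0 < x i)%R = ((1 <= x i)%R + fractional x i)%N :> nat.
Proof.
rewrite /fractional; have [x_ge1|x_lt1] := leP 1 (x i).
  by rewrite (lt_le_trans ltr01 x_ge1).
by rewrite andbT.
Qed.

Lemma cuts_on_symdiff (A B : {set 'I_n}) :
  (#|A :&: B :&: [set i | fractional x i]| <= 1)%N ->
  cuts_on ((A :\: B) :|: (B :\: A)) -> cuts_on A \/ cuts_on B.
Proof.
move=> frac_le1 [Y [oY distY]].
pose rnd (b : bool) := [set i | if b then 0 < x i else 1 <= x i].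
have cut_side S S' b :
    odd (#|(S :\: S') :&: Y| + #|(S :&: S') :&: rnd b|) ->
    \sum_(i in S :\: S') bitdist i (i \in Y) +
      \sum_(i in S :&: S') bitdist i (i \in rnd b) < 1 ->
    cuts_on S.
  move=> oS distS; exists [set i | if i \in S' then i \in rnd b else i \in Y].
  by rewrite card_setI_sum (big_splice (fun _ b => b : nat)) -!card_setI_sum big_splice.
have oddAB : odd (#|(A :\: B) :&: Y| + #|(B :\: A) :&: Y|).
  by rewrite card_setI_sum big_setSD -!card_setI_sum in oY.
have distAB : \sum_(i in A :\: B) bitdist i (i \in Y) +
              \sum_(i in B :\: A) bitdist i (i \in Y) < 1.
  by rewrite big_setSD in distY.
have round_dist : \sum_(i in A :&: B) bitdist i (i \in rnd false) +
                  \sum_(i in A :&: B) bitdist i (i \in rnd true) =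
                  #|A :&: B :&: [set i | fractional x i]|%:R.
  rewrite -big_split card_setI_sum natr_sum; apply: eq_bigr => i _.
  by rewrite !inE /=; apply: bitdist_round.
have round_card : #|A :&: B :&: rnd true| =
                  (#|A :&: B :&: rnd false| + #|A :&: B :&: [set i | fractional x i]|)%N.
  by rewrite !card_setI_sum -big_split; apply: eq_bigr => i _; rewrite !inE round_up_down.
have [b [[oA distA] | [oB distB]]] :=
  odd_cheap_side (t := fun b => #|A :&: B :&: rnd b|)
    (sum_bitdist_ge0 _ _) (sum_bitdist_ge0 _ _)
    (fun b => sum_bitdist_ge0 (A :&: B) (mem (rnd b)))
    oddAB distAB frac_le1 round_dist round_card.
  by left; apply: cut_side oA distA.
by right; rewrite [A :&: B]setIC in oB distB; apply: cut_side oB distB.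
Qed.

End CutsOn.

Lemma nbhdD n (r g : 'rV['F_2]_n) :
  nbhd (r + g) = (nbhd r :\: nbhd g) :|: (nbhd g :\: nbhd r).
Proof.
apply/setP => i; rewrite !inE mxE.
by case: (r 0 i) => [[|[|//]]] ?; case: (g 0 i) => [[|[|//]]] ?.
Qed.

Lemma generates_cutD (R : realFieldType) n (x : 'I_n -> R) (r g : 'rV['F_2]_n) :
  (forall i, 0 <= x i <= 1) ->
  (#|nbhd r :&: nbhd g :&: [set i | fractional x i]| <= 1)%N ->
  generates_cut (r + g) x -> generates_cut r x \/ generates_cut g x.
Proof. by move=> x01 frac_le1; rewrite !generates_cutE nbhdD; apply: cuts_on_symdiff. Qed.

Section FractionalSubgraph.
Variables (R : realFieldType) (m n : nat) (H : 'M['F_2]_(m, n)) (x : 'I_n -> R).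

Definition frac_adj (j : 'I_m) (i : 'I_n) := fractional x i && (H j i != 0).

Lemma fractional_cycle_in_frac_adj T : has_cycle_in frac_adj T -> fractional_cycle_in H x T.
Proof.
case=> k [c [v [c_inj v_inj adj adjS cT]]]; exists k, c, v; split => //.
  by split => t; have /andP[] := adj t.
by move=> t; have /andP[] := adjS t.
Qed.

Lemma fractional_cycle_in_subset (T T' : {set 'I_m}) :
  T' \subset T -> fractional_cycle_in H x T' -> fractional_cycle_in H x T.
Proof.
move=> sub [k [c [v [c_inj v_inj adj adjS cT]]]]; exists k, c, v; split => // t.
exact: (subsetP sub).
Qed.

Lemma cut_generating_set0 : ~ cut_generating H x set0.
Proof.
rewrite /cut_generating big_set0 => -[V [VN oV _]].
have : nbhd (0 : 'rV['F_2]_n) = set0 by apply/setP => i; rewrite !inE mxE eqxx.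
by move=> N0; rewrite N0 subset0 in VN; rewrite (eqP VN) cards0 in oV.
Qed.

Lemma cut_generating_setD1 (T : {set 'I_m}) j :
  (forall i, 0 <= x i <= 1) -> ~ generates_cut (row j H) x ->
  j \in T -> (#|shared frac_adj T j| <= 1)%N ->
  cut_generating H x T -> cut_generating H x (T :\ j).
Proof.
move=> x01 row_uncut jT shared_le1; rewrite /cut_generating (big_setD1 j jT).
case/generates_cutD => //; apply: leq_trans shared_le1; apply: subset_leq_card.
apply/subsetP => i; rewrite !inE mxE summxE => /andP[/andP[Hji sum_ne0] fi].
rewrite /frac_adj fi Hji /=; apply: contraNT sum_ne0 => /exists_inPn none.
apply/eqP/big1 => k; rewrite !inE => /andP[kj kT].
by have := none k kT; rewrite kj mxE => /negbNE/eqP.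
Qed.

End FractionalSubgraph.

Theorem theorem3 (R : realFieldType) (m n : nat) (H : 'M['F_2]_(m, n))
    (x : 'I_n -> R) (T : {set 'I_m}) :
  in_fundamental_polytope H x ->
  cut_generating H x T ->
  fractional_cycle_in H x T.
Proof.
case=> x01 check_ineq.
have row_uncut j : ~ generates_cut (row j H) x.
  by case=> V [VN oV lt]; have := check_ineq j V VN oV; lra.
have [N] := ubnP #|T|; elim: N T => // N IH T leTN cT.
have [T0 | [j0 j0T]] := set_0Vmem T.
  by rewrite T0 in cT; case: (cut_generating_set0 cT).
have [/exists_inP[j jT shared_le1] | /exists_inPn shared_gt1] :=
  boolP [exists j in T, #|shared (frac_adj H x) T j| <= 1]%N.
  apply: (fractional_cycle_in_subset (subsetDl T [set j])); apply: IH.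
    by move: leTN; rewrite (cardsD1 j T) jT.
  exact: cut_generating_setD1.
apply/fractional_cycle_in_frac_adj/(has_cycle_in_shared _ j0T) => j jT.
by rewrite ltnNge shared_gt1.
Qed.
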